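(* Let $R$ be a commutative ring with unity and let $G=\{(a,b,c):a,b,c\in R\}$ with operation $(a,b,c)\cdot(a',b',c')=(a+a',b+b',c+c'+ab')$. Then $G$ is a group of nilpotence class at most two with $[(a,b,c),(a',b',c')]=(0,0,ab'-a'b)$, and for each $x\in R$ the map $\psi_x(a,b,c)=(xa,xb,x^2c)$ is an endomorphism of $G$. Setting $g\circ_x h=g\cdot\psi_x(g)\cdot h\cdot\psi_x(g)^{-1}$, one has, for $g=(a,b,c)$, $h=(a',b',c')$, $g\circ_x h=g\cdot h\cdot(0,0,x(ab'-a'b))$; the family $(\circ_x:x\in R)$ is a brace block on $G$, and its operations are pairwise distinct, so the brace block has cardinality $|R|$. Moreover, if $R$ is a topological ring and $(r_n)$ is a sequence in $R$ converging to $0$, then $\lim_{n\to\infty}g\circ_{r_n}h=g\cdot h$ for all $g,h\in G$ (in the product topology on $G=R^3$).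
   Context: Commutator convention: $[x,y]=xyx^{-1}y^{-1}$. A skew brace is a triple $(G,\cdot,\circ)$ where $(G,\cdot)$ and $(G,\circ)$ are groups and $g\circ(h\cdot k)=(g\circ h)\cdot g^{-1}\cdot(g\circ k)$ for all $g,h,k$. A bi-skew brace is a triple $(G,\cdot,\circ)$ such that both $(G,\cdot,\circ)$ and $(G,\circ,\cdot)$ are skew braces. A brace block on a set $G$ is a family of group operations on $G$ any two of which form a bi-skew brace. *)

From HB Require Import structures.
From mathcomp Require Import all_boot all_order all_algebra.
From mathcomp Require Import all_classical all_reals all_analysis.
Set Implicit Arguments. Unset Strict Implicit. Unset Printing Implicit Defensive.
Import GRing.Theory.
Local Open Scope ring_scope.

Definition is_group (T : Type) (op : T -> T -> T) : Prop :=
  associative op /\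
  exists e : T, left_id e op /\ right_id e op /\
    forall x, exists y, op x y = e /\ op y x = e.

Definition skew_brace (T : Type) (dot circ : T -> T -> T) : Prop :=
  is_group dot /\ is_group circ /\
  forall (e g gi h k : T), left_id e dot -> right_id e dot -> dot g gi = e ->
    circ g (dot h k) = dot (dot (circ g h) gi) (circ g k).

Definition bi_skew_brace (T : Type) (dot circ : T -> T -> T) : Prop :=
  skew_brace dot circ /\ skew_brace circ dot.

Definition brace_block (I T : Type) (ops : I -> T -> T -> T) : Prop :=
  (forall i, is_group (ops i)) /\ forall i j, bi_skew_brace (ops i) (ops j).

Section HeisG.
Variable R : comPzRingType.

Definition hmul (g h : R * R * R) : R * R * R :=
  (g.1.1 + h.1.1, g.1.2 + h.1.2, g.2 + h.2 + g.1.1 * h.1.2).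

Definition hone : R * R * R := (0, 0, 0).

Definition hinv (g : R * R * R) : R * R * R :=
  (- g.1.1, - g.1.2, - g.2 + g.1.1 * g.1.2).

Definition hcomm (x y : R * R * R) : R * R * R :=
  hmul (hmul (hmul x y) (hinv x)) (hinv y).

Definition hpsi (x : R) (g : R * R * R) : R * R * R :=
  (x * g.1.1, x * g.1.2, x ^+ 2 * g.2).

Definition hcirc (x : R) (g h : R * R * R) : R * R * R :=
  hmul (hmul (hmul g (hpsi x g)) h) (hinv (hpsi x g)).
End HeisG.

#[short(type="topComPzRingType")]
HB.structure Definition TopComPzRing := {R of Topological R & GRing.ComPzRing R}.

Definition topological_ring (R : topComPzRingType) : Prop :=
  continuous (fun p : R * R => p.1 + p.2) /\
  continuous (fun x : R => - x) /\
  continuous (fun p : R * R => p.1 * p.2).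

From HB Require Import structures.
From mathcomp Require Import all_boot all_order all_algebra.
From mathcomp Require Import all_classical all_reals all_analysis.
From mathcomp Require Import ring.
Import GRing.Theory.
Local Open Scope classical_set_scope.
Local Open Scope ring_scope.

(* Every [o_x] is [(a,b,c) o_x (a',b',c') = (a+a', b+b', c+c'+ab' + x(ab'-a'b))]:
   it is [hmul] twisted by [x] times the alternating form [ab'-a'b], and
   [hmul] itself is [o_0].  All [o_x] share the identity [(0,0,0)] and the
   inverse [hinv], so every group and brace axiom is a polynomial identity.
   Evaluating [o_x] at [(1,0,0), (0,1,0)] recovers [x], hence injectivity;
   and [g o_(r n) h] differs from [g h] by [r n] times a constant, hence the
   limit. *)

Lemma left_id_right_id_eq {T : Type} {op : T -> T -> T} {e e' : T} :
  left_id e op -> right_id e' op -> e = e'.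
Proof. by move=> le re'; rewrite -[RHS]le re'. Qed.

Lemma right_inverse_eq {T : Type} {op : T -> T -> T} {e x y z : T} :
  associative op -> left_id e op -> right_id e op ->
  op y x = e -> op x z = e -> z = y.
Proof. by move=> opA le re yx xz; rewrite -[z]le -yx -opA xz re. Qed.

Section HeisenbergBraces.
Variable R : comPzRingType.
Implicit Types (g h k : R * R * R) (x : R).

Lemma hcircE x g h : hcirc x g h =
  (g.1.1 + h.1.1, g.1.2 + h.1.2,
   g.2 + h.2 + g.1.1 * h.1.2 + x * (g.1.1 * h.1.2 - h.1.1 * g.1.2)).
Proof.
case: g => [[a b] c]; case: h => [[a' b'] c'].
rewrite /hcirc /hmul /hpsi /hinv /=; congr (_, _, _); ring.
Qed.

Lemma hcirc0 : @hcirc R 0 = @hmul R.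
Proof.
apply: funext => -[[a b] c]; apply: funext => -[[a' b'] c'].
by rewrite hcircE /hmul /=; congr (_, _, _); ring.
Qed.

Lemma hcirc_hmulE (x a b c a' b' c' : R) :
  hcirc x (a, b, c) (a', b', c')
  = hmul (hmul (a, b, c) (a', b', c')) (0, 0, x * (a * b' - a' * b)).
Proof. by rewrite hcircE /hmul /=; congr (_, _, _); ring. Qed.

Lemma hcircA x : associative (@hcirc R x).
Proof.
move=> [[a b] c] [[a' b'] c'] [[a'' b''] c'']; rewrite !hcircE /=.
by congr (_, _, _); ring.
Qed.

Lemma hcirc1g x : left_id (hone R) (@hcirc R x).
Proof. by case=> [[a b] c]; rewrite hcircE /=; congr (_, _, _); ring. Qed.

Lemma hcircg1 x : right_id (hone R) (@hcirc R x).
Proof. by case=> [[a b] c]; rewrite hcircE /=; congr (_, _, _); ring. Qed.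

Lemma hcircgV x g : hcirc x g (hinv g) = hone R.
Proof. by case: g => [[a b] c]; rewrite hcircE /=; congr (_, _, _); ring. Qed.

Lemma hcircVg x g : hcirc x (hinv g) g = hone R.
Proof. by case: g => [[a b] c]; rewrite hcircE /=; congr (_, _, _); ring. Qed.

Lemma hcirc_is_group x : is_group (@hcirc R x).
Proof.
split; first exact: hcircA.
exists (hone R); split; first exact: hcirc1g.
split; first exact: hcircg1.
by move=> g; exists (hinv g); rewrite hcircgV hcircVg.
Qed.

Lemma hcirc_brace_identity i j g h k :
  hcirc j g (hcirc i h k) = hcirc i (hcirc i (hcirc j g h) (hinv g)) (hcirc j g k).
Proof.
move: g h k => [[a b] c] [[a' b'] c'] [[a'' b''] c''].
by rewrite !hcircE /=; congr (_, _, _); ring.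
Qed.

Lemma hcirc_skew_brace i j : skew_brace (@hcirc R i) (@hcirc R j).
Proof.
do 2 (split; first exact: hcirc_is_group).
move=> e g gi h k le re ggi.
have e1 : e = hone R := left_id_right_id_eq le (hcircg1 i).
have -> : gi = hinv g.
  by apply: (right_inverse_eq (hcircA i) le re _ ggi); rewrite e1 hcircVg.
exact: hcirc_brace_identity.
Qed.

Lemma hcirc_brace_block : brace_block (@hcirc R).
Proof.
split; first exact: hcirc_is_group.
by move=> i j; split; exact: hcirc_skew_brace.
Qed.

Lemma hcirc_inj : injective (@hcirc R).
Proof.
have hcirc_e1e2 x : (hcirc x (1, 0, 0) (0, 1, 0)).2 = 1 + x.
  by rewrite hcircE /=; ring.
by move=> x y /(congr1 (fun o => (o (1, 0, 0) (0, 1, 0)).2));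
  rewrite !hcirc_e1e2 => /addrI.
Qed.

Lemma hcommE (a b c a' b' c' : R) :
  hcomm (a, b, c) (a', b', c') = (0, 0, a * b' - a' * b).
Proof. by rewrite /hcomm /hmul /hinv /=; congr (_, _, _); ring. Qed.

Lemma hcomm_central g h k : hmul (hcomm g h) k = hmul k (hcomm g h).
Proof.
move: g h k => [[a b] c] [[a' b'] c'] [[a'' b''] c''].
by rewrite hcommE /hmul /=; congr (_, _, _); ring.
Qed.

Lemma hpsiM x g h : hpsi x (hmul g h) = hmul (hpsi x g) (hpsi x h).
Proof.
move: g h => [[a b] c] [[a' b'] c'].
by rewrite /hpsi /hmul /=; congr (_, _, _); ring.
Qed.

End HeisenbergBraces.

Lemma cvg_addr_scale {R : topComPzRingType} {T : Type} {F : set_system T}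
    {FF : Filter F} {f : T -> R} (c d : R) :
  topological_ring R -> f @ F --> 0 -> (fun t => d + f t * c) @ F --> d.
Proof.
move=> [cadd [_ cmul]] f0.
have fc0 : (fun t => f t * c) @ F --> 0 * c.
  exact: (continuous2_cvg FF (h := *%R) (cmul (_, _)) f0 (cvg_cst c)).
have := continuous2_cvg FF (h := +%R) (cadd (_, _)) (cvg_cst d) fc0.
by rewrite mul0r addr0 => dfc; exact: dfc.
Qed.

Lemma hcirc_cvg (R : topComPzRingType) (r : nat -> R) (g h : R * R * R) :
  topological_ring R -> r @ \oo --> 0 ->
  (fun n => hcirc (r n) g h) @ \oo --> hmul g h.
Proof.
move=> Rtop r0; move: g h => [[a b] c] [[a' b'] c'].
under eq_fun do rewrite hcircE /=.
have c3 : (fun n => c + c' + a * b' + r n * (a * b' - a' * b)) @ \oo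
           --> c + c' + a * b' by exact: cvg_addr_scale.
have c123 := cvg_pair (cvg_pair (cvg_cst (a + a')) (cvg_cst (b + b'))) c3.
apply: c123.
Qed.

Theorem mainTheorem10 :
  (forall R : comPzRingType,
    is_group (@hmul R) /\
    (forall g : R * R * R, hmul (hone R) g = g /\ hmul g (hone R) = g) /\
    (forall g : R * R * R, hmul g (hinv g) = hone R /\ hmul (hinv g) g = hone R) /\
    (forall a b c a' b' c' : R,
        hcomm (a, b, c) (a', b', c') = (0, 0, a * b' - a' * b)) /\
    (forall x y z : R * R * R, hmul (hcomm x y) z = hmul z (hcomm x y)) /\
    (forall (x : R) (g h : R * R * R), hpsi x (hmul g h) = hmul (hpsi x g) (hpsi x h)) /\
    (forall (x a b c a' b' c' : R),
        hcirc x (a, b, c) (a', b', c')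
        = hmul (hmul (a, b, c) (a', b', c')) (0, 0, x * (a * b' - a' * b))) /\
    brace_block (@hcirc R) /\
    injective (@hcirc R)) /\
  (forall R : topComPzRingType, topological_ring R ->
    forall r : nat -> R, r @ \oo --> (0 : R) ->
    forall g h : R * R * R,
      (fun n => hcirc (r n) g h) @ \oo --> hmul g h).
Proof.
split=> [R|R Rtop r r0 g h]; last exact: hcirc_cvg.
rewrite -hcirc0.
split; first exact: hcirc_is_group.
split; first by move=> g; rewrite hcirc1g hcircg1.
split; first by move=> g; rewrite hcircgV hcircVg.
split; first exact: hcommE.
split; first by move=> *; rewrite hcirc0; exact: hcomm_central.
split; first by move=> *; rewrite hcirc0; exact: hpsiM.
split; first by move=> *; rewrite hcirc0; exact: hcirc_hmulE.
by split; [exact: hcirc_brace_block | exact: hcirc_inj].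
Qed.
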